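(* For every integer $n\ge 2$, $$ \frac{1}{3}\left(2^{n-1}+\frac{5+(-1)^n}{2}2^{\lfloor n/2\rfloor-1}+\frac{-1+(-1)^n+2(-1)^{\lfloor (n+1)/2\rfloor n}}{2}\right) =\sum_{d=0}^{\lfloor (n-2)/2\rfloor}\left(F_{n-d-1}^{(d)}+\frac{1+(-1)^{nd}}{2}F^{(\lfloor d/2\rfloor)}_{\lfloor n/2\rfloor-\lfloor (d+1)/2\rfloor}\right). $$
   Context: $F_0,F_1,F_2,\dots=0,1,1,2,3,5,\dots$ is the Fibonacci sequence, and the convolved Fibonacci sequences are defined by $F_m^{(0)}=F_m$ and $F_m^{(c+1)}=\sum_{i=0}^{m}F_iF_{m-i}^{(c)}$ for $m\ge 0$, $c\ge 0$. *)

From HB Require Import structures.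
From mathcomp Require Import all_boot all_order all_algebra.
Set Implicit Arguments. Unset Strict Implicit. Unset Printing Implicit Defensive.

Fixpoint fib (m : nat) : nat :=
  match m with
  | 0 => 0
  | 1 => 1
  | (p.+1 as q).+1 => fib q + fib p
  end.

Fixpoint cfib (c m : nat) : nat :=
  match c with
  | 0 => fib m
  | c'.+1 => \sum_(i < m.+1) fib i * cfib c' (m - i)
  end.

Lemma cfib_test : [:: cfib 1 0; cfib 1 1; cfib 1 2; cfib 1 3; cfib 1 4] = [:: 0; 0; 1; 2; 5].
Proof. by rewrite /= !big_ord_recr !big_ord0. Qed.

From mathcomp Require Import all_boot all_order all_algebra.
From mathcomp Require Import zify ring.
Import GRing.Theory Num.Theory.

(* The anti-diagonal sums A_m = \sum_d F^(d)_(m-d) satisfy A_(m+2) = A_(m+1) + 2 A_m,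
   by summing the recurrence F^(c+1)_(m+2) = F^(c+1)_(m+1) + F^(c+1)_m + F^(c)_(m+1)
   along an anti-diagonal; hence A_m = (2^m - (-1)^m)/3.  Since F^(c)_m = 0 for m <= c,
   the first sum of the theorem is A_(n-1), and grouping d = 2e, 2e+1 in the second
   sum gives A_k + A_(k-1) for n = 2k and A_k for n = 2k+1 (only even d survive). *)

Lemma fibSS m : fib m.+2 = fib m.+1 + fib m.
Proof. by []. Qed.

Lemma cfibSE c m : cfib c.+1 m = \sum_(0 <= i < m.+1) fib i * cfib c (m - i).
Proof. by rewrite big_mkord. Qed.

Lemma cfib_eq0 c m : m <= c -> cfib c m = 0.
Proof.
elim: c m => [|c IH] m hm; first by move: hm; rewrite leqn0 => /eqP ->.
rewrite cfibSE big_nat_cond big1 // => -[|i] _ //.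
by rewrite IH ?muln0 //; lia.
Qed.

Lemma cfibSS c m : cfib c.+1 m.+2 = cfib c.+1 m.+1 + cfib c.+1 m + cfib c m.+1.
Proof.
rewrite !cfibSE big_nat_recl // big_nat_recl // [in X in X + _ + _]big_nat_recl //.
rewrite !mul0n !add0n mul1n subn1 addnC; congr (_ + _).
rewrite -big_split /=; apply: eq_bigr => i _.
by rewrite !subSS mulnDl.
Qed.

(* With truncated predecessors this also holds for m < 2, where every term vanishes. *)
Lemma cfibS_pred c m : cfib c.+1 m = cfib c.+1 m.-1 + cfib c.+1 m.-2 + cfib c m.-1.
Proof. by case: m => [|[|m]]; [rewrite !cfib_eq0.. | exact: cfibSS]. Qed.

Lemma sum_nat_widen (f : nat -> nat) K L : K <= L ->
  (forall d, K <= d -> f d = 0) ->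
  \sum_(0 <= d < K) f d = \sum_(0 <= d < L) f d.
Proof.
move=> hKL f0; rewrite (big_cat_nat (leq0n K) hKL) /=.
rewrite [X in _ + X]big_nat_cond [X in _ + X]big1 ?addn0 //.
by move=> d /andP[/andP[/f0]].
Qed.

Definition cfib_antidiag m := \sum_(0 <= d < m.+1) cfib d (m - d).

Lemma cfib_antidiagE m N : (m <= N.*2) ->
  cfib_antidiag m = \sum_(0 <= d < N) cfib d (m - d).
Proof.
move=> hmN; rewrite /cfib_antidiag.
rewrite (@sum_nat_widen _ m.+1 (N + m.+1)) ?(@sum_nat_widen _ N (N + m.+1))
  ?leq_addl ?leq_addr // => d hd; apply: cfib_eq0; lia.
Qed.

Lemma cfib_antidiagSS m :
  cfib_antidiag m.+2 = cfib_antidiag m.+1 + 2 * cfib_antidiag m.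
Proof.
have peel k : (k <= m.+2) ->
    cfib_antidiag k = fib k + \sum_(0 <= d < m.+2) cfib d.+1 (k - d.+1).
  by move=> hk; rewrite (@cfib_antidiagE k m.+3) ?big_nat_recl ?subn0 //; lia.
rewrite (peel m.+2) // (peel m.+1) // (peel m) ?leqW //.
have -> : \sum_(0 <= d < m.+2) cfib d.+1 (m.+2 - d.+1)
    = \sum_(0 <= d < m.+2) cfib d.+1 (m.+1 - d.+1)
      + \sum_(0 <= d < m.+2) cfib d.+1 (m - d.+1)
      + \sum_(0 <= d < m.+2) cfib d (m - d).
  rewrite -!big_split; apply: eq_bigr => d _.
  by rewrite cfibS_pred; congr (cfib _ _ + cfib _ _ + cfib _ _); lia.
rewrite -(@cfib_antidiagE m m.+2); last lia.
rewrite (peel m) ?leqW // fibSS; lia.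
Qed.

Lemma sum_nat_pairs (f : nat -> nat) k :
  \sum_(0 <= d < k.*2) f d = \sum_(0 <= e < k) (f e.*2 + f e.*2.+1).
Proof.
elim: k => [|k IH]; first by rewrite !big_geq.
by rewrite doubleS !big_nat_recr //= IH addnA.
Qed.

Lemma sum_sign_cfib_half n k :
  \sum_(0 <= d < k) ~~ odd (n * d) * cfib d./2 (k - (d.+1)./2)
  = cfib_antidiag k + ~~ odd n * cfib_antidiag k.-1.
Proof.
rewrite (@sum_nat_widen _ k k.*2); first last.
- by move=> d hd; rewrite cfib_eq0 ?muln0 //; lia.
- by rewrite -addnn leq_addr.
rewrite sum_nat_pairs (cfib_antidiagE k k) ?(cfib_antidiagE k.-1 k); [|lia..].
rewrite big_distrr -big_split /=; apply: eq_bigr => e _.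
rewrite !oddM oddS odd_double andbF andbT mul1n uphalf_double doubleK.
by congr (_ + _ * cfib _ _); lia.
Qed.

Lemma sum_cfib_antidiag_pred n :
  \sum_(0 <= d < n./2) cfib d (n - d - 1) = cfib_antidiag n.-1.
Proof.
rewrite (cfib_antidiagE n.-1 n./2); last lia.
by apply: eq_bigr => d _; congr (cfib _ _); lia.
Qed.

Local Open Scope ring_scope.

Lemma cfib_antidiag_closed (R : numFieldType) m :
  (cfib_antidiag m)%:R = (2 ^+ m - (-1) ^+ m) / 3 :> R.
Proof.
have nz3 : 3 != 0 :> R by rewrite pnatr_eq0.
suff [] : (cfib_antidiag m)%:R = (2 ^+ m - (-1) ^+ m) / 3 :> R
       /\ (cfib_antidiag m.+1)%:R = (2 ^+ m.+1 - (-1) ^+ m.+1) / 3 :> R by [].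
elim: m => [|m [IHm IHm1]].
  rewrite (cfib_antidiagE 0 0) // (cfib_antidiagE 1 1) // big_geq // big_nat1.
  by split; rewrite ?subn0 /=; field.
split=> //; rewrite cfib_antidiagSS natrD natrM IHm IHm1 !exprS.
by field.
Qed.

Lemma signr_ifodd (R : pzRingType) m : (-1) ^+ m = if odd m then -1 else 1 :> R.
Proof. by rewrite -signr_odd; case: (odd m). Qed.

Lemma half_one_plus_sign (R : numFieldType) m :
  (1 + (-1) ^+ m) / 2 = (~~ odd m)%:R :> R.
Proof.
have nz2 : 2 != 0 :> R by rewrite pnatr_eq0.
by rewrite -signr_odd; case: (odd m) => /=; field.
Qed.

Theorem corollary1 (n : nat) (hn : (2 <= n)%N) :
  3^-1 * ((2 : rat) ^+ (n - 1)
          + (5 + (-1) ^+ n) / 2 * 2 ^+ (n./2 - 1)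
          + (-1 + (-1) ^+ n + 2 * (-1) ^+ ((n.+1)./2 * n)) / 2)
  = \sum_(0 <= d < ((n - 2)./2).+1)
      ((cfib d (n - d - 1))%:R
       + (1 + (-1) ^+ (n * d)) / 2 * (cfib d./2 (n./2 - (d.+1)./2))%:R).
Proof.
have -> : ((n - 2)./2).+1 = n./2 by lia.
under eq_bigr => d _ do rewrite half_one_plus_sign -natrM.
rewrite big_split /= -!natr_sum sum_cfib_antidiag_pred sum_sign_cfib_half.
rewrite natrD natrM !cfib_antidiag_closed.
have [k [->|->]] : exists k, n = k.+1.*2 \/ n = k.+1.*2.+1.
  by exists (n./2).-1; case: (boolP (odd n)) => hodd; [right|left]; lia.
- rewrite doubleK uphalf_double odd_double doubleS !subn1 /=.
  rewrite !signr_ifodd !oddM /= !odd_double /= -addnn !exprS !exprD.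
  by case: (odd k) => /=; field.
- rewrite -uphalfE uphalf_double uphalfE -doubleS doubleK oddS odd_double subn1 /=.
  rewrite !signr_ifodd !oddM /= !odd_double /= subn1 doubleS -addnn !exprS !exprD.
  by case: (odd k) => /=; field.
Qed.
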